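(* Let $\Gamma$ be a finite group, $\theta:\Gamma\to O(\mathbb{R}^d)$ a point group, and let $(G,p)$ be a bar-joint framework with $V(G)=\Gamma\times\hat V$ that is $\theta$-symmetric, with quotient $\Gamma$-gain graph $G/\Gamma$ (so $G$ is the lift of $G/\Gamma$), and with $p\in\mathcal{C}_\theta(V)$. If $(G,p)$ is universally rigid, then the problem (P$^\Gamma$): find $X\in(\mathcal{L}^V)^\Gamma_+$ with $\langle X,F_{(u,v,\gamma)}\rangle=\langle P^\top P,F_{(u,v,\gamma)}\rangle$ for all $(u,v,\gamma)\in E(G/\Gamma)$, has the unique solution $P^\top P$.
   Context: A bar-joint framework $(G,p)$ is a tensegrity with all edges bars: $G=(V,E)$ finite simple graph, $p:V\to\mathbb{R}^d$; it is universally rigid if for every $d'\geq d$ every $q:V\to\mathbb{R}^{d'}$ with $\|q_i-q_j\|=\|p_i-p_j\|$ for all $ij\in E$ satisfies $\|q_i-q_j\|=\|p_i-p_j\|$ for all $i,j\in V$. A $\Gamma$-gain graph on $\hat V$ is a set of triples $(u,v,\gamma)\in\hat V\times\hat V\times\Gamma$ up to $(u,v,\gamma)\sim(v,u,\gamma^{-1})$; its lift is the graph on $\Gamma\times\hat V$ with $\{(\alpha,u),(\beta,v)\}$ an edge iff $(u,v,\alpha^{-1}\beta)$ is in the gain graph. $p$ is compatible with $\theta$ if $\theta(\gamma)p_{(\alpha,v)}=p_{(\gamma\alpha,v)}$ for all $\gamma,\alpha,v$; $\mathcal{C}_\theta(V)$ is the set of compatible configurations with $\sum_{i\in V}p_i=\mathbf{0}$.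 $(G,p)$ is $\theta$-symmetric if $G$ is the lift of a $\Gamma$-gain graph and $p$ is compatible with $\theta$. $P$ is the $d\times|V|$ matrix with columns $p_i$, $P^\top P$ its Gram matrix. $F_{ij}=(\mathbf{e}_i-\mathbf{e}_j)(\mathbf{e}_i-\mathbf{e}_j)^\top$ and $F_{(u,v,\gamma)}=\sum_{\alpha\in\Gamma}F_{(\alpha,u)(\alpha\gamma,v)}$. $(\mathcal{L}^V)^\Gamma_+$ is the set of positive semidefinite symmetric $V\times V$ matrices $L$ with $L\mathbf{1}_V=\mathbf{0}$ and $L[(\alpha,u),(\beta,v)]=L[(\gamma\alpha,u),(\gamma\beta,v)]$ for all $\alpha,\beta,\gamma\in\Gamma$, $u,v\in\hat V$. $\langle A,B\rangle=\operatorname{tr}(AB)$. *)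

From HB Require Import structures.
From mathcomp Require Import all_boot all_order all_algebra all_fingroup.
From mathcomp Require Import reals.
Set Implicit Arguments. Unset Strict Implicit. Unset Printing Implicit Defensive.
Import Order.TTheory GRing.Theory Num.Theory.
Local Open Scope ring_scope.

Section Defs.
Variable R : realType.

Definition edist (k : nat) (x y : 'cV[R]_k) : R :=
  Num.sqrt (\sum_(i < k) (x i 0 - y i 0) ^+ 2).

Definition orthogonal_mx (d : nat) (A : 'M[R]_d) : Prop := A *m A^T = 1%:M.

Definition point_group (gT : finGroupType) (d : nat) (theta : gT -> 'M[R]_d) : Prop :=
  [/\ theta 1%g = 1%:M,
      (forall a b : gT, theta (a * b)%g = theta a *m theta b) &
      (forall a : gT, orthogonal_mx (theta a))].

Definition universally_rigid (V : finType) (d : nat) (adj : rel V)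
    (p : V -> 'cV[R]_d) : Prop :=
  forall d' : nat, (d <= d')%N -> forall q : V -> 'cV[R]_d',
    (forall i j, adj i j -> edist (q i) (q j) = edist (p i) (p j)) ->
    forall i j : V, edist (q i) (q j) = edist (p i) (p j).

Definition gain_equiv (gT : finGroupType) (Vh : finType)
    (e f : Vh * Vh * gT) : bool :=
  let: (u, v, g) := e in let: (u', v', g') := f in
  [&& u == u', v == v' & g == g'] || [&& u == v', v == u' & g == (g'^-1)%g].

Definition lift_adj (gT : finGroupType) (Vh : finType)
    (E : {set Vh * Vh * gT}) : rel (gT * Vh) :=
  fun x y => [exists e in E, gain_equiv e (x.2, y.2, (x.1^-1 * y.1)%g)].

Definition compatible (gT : finGroupType) (Vh : finType) (d : nat)
    (theta : gT -> 'M[R]_d) (p : gT * Vh -> 'cV[R]_d) : Prop :=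
  forall (g a : gT) (v : Vh), theta g *m p (a, v) = p ((g * a)%g, v).

Definition in_C_theta (gT : finGroupType) (Vh : finType) (d : nat)
    (theta : gT -> 'M[R]_d) (p : gT * Vh -> 'cV[R]_d) : Prop :=
  compatible theta p /\ \sum_(i : gT * Vh) p i = 0.

Definition config_mx (V : finType) (d : nat) (p : V -> 'cV[R]_d) : 'M[R]_(d, #|V|) :=
  \matrix_(k < d, i < #|V|) p (enum_val i) k 0.

Definition gram_mx (V : finType) (d : nat) (p : V -> 'cV[R]_d) : 'M[R]_#|V| :=
  (config_mx p)^T *m config_mx p.

Definition basis_vec (V : finType) (i : V) : 'cV[R]_#|V| := delta_mx (enum_rank i) 0.

Definition F_pair (V : finType) (i j : V) : 'M[R]_#|V| :=
  (basis_vec i - basis_vec j) *m (basis_vec i - basis_vec j)^T.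

Definition F_gain (gT : finGroupType) (Vh : finType) (e : Vh * Vh * gT)
    : 'M[R]_#|{: gT * Vh}| :=
  let: (u, v, g) := e in \sum_(a : gT) F_pair (a, u) ((a * g)%g, v).

Definition mx_inner (n : nat) (A B : 'M[R]_n) : R := \tr (A *m B).

Definition psd_mx (n : nat) (A : 'M[R]_n) : Prop :=
  forall x : 'cV[R]_n, 0 <= (x^T *m A *m x) 0 0.

Definition in_LGamma_plus (gT : finGroupType) (Vh : finType)
    (L : 'M[R]_#|{: gT * Vh}|) : Prop :=
  [/\ L^T = L, psd_mx L, L *m (const_mx 1 : 'cV[R]_#|{: gT * Vh}|) = 0 &
      forall (a b g : gT) (u v : Vh),
        L (enum_rank (a, u)) (enum_rank (b, v)) =
        L (enum_rank ((g * a)%g, u)) (enum_rank ((g * b)%g, v))].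

End Defs.

From HB Require Import structures.
From mathcomp Require Import all_boot all_order all_algebra all_fingroup.
From mathcomp Require Import reals ring lra.
Set Implicit Arguments. Unset Strict Implicit. Unset Printing Implicit Defensive.
Import Order.TTheory GRing.Theory Num.Theory.
Local Open Scope ring_scope.

(* The Gram matrix P^T P lies in (L^V)^Gamma_+ because theta is orthogonal and p
   is compatible and centred.  Conversely, Gamma-invariance of X turns
   <X, F_(u,v,g)> into |Gamma| times the X-squared distance between (1,u) and
   (g,v), so X and P^T P give the same squared length to every bar of the lift.
   Factoring the positive semidefinite X as Q^T Q, the columns of Q padded with
   d zeros form a framework in R^(m+d) with the bar lengths of p; universal
   rigidity then makes X and P^T P agree on all squared distances, and a
   symmetric matrix with zero row sums is determined by its squared distances. *)

Section BilinearForm.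
Variable R : comPzRingType.

Definition bform n (A : 'M[R]_n) (x y : 'cV[R]_n) : R := (x^T *m A *m y) 0 0.

Definition sqdist n (A : 'M[R]_n) (i j : 'I_n) : R := A i i + A j j - A i j - A j i.

Variables (n : nat) (A : 'M[R]_n).

Lemma bformDl x y z : bform A (x + y) z = bform A x z + bform A y z.
Proof. by rewrite /bform linearD /= !mulmxDl mxE. Qed.

Lemma bformDr x y z : bform A z (x + y) = bform A z x + bform A z y.
Proof. by rewrite /bform !mulmxDr mxE. Qed.

Lemma bformBl x y z : bform A (x - y) z = bform A x z - bform A y z.
Proof. by rewrite /bform linearB /= !mulmxBl !mxE. Qed.

Lemma bformBr x y z : bform A z (x - y) = bform A z x - bform A z y.
Proof. by rewrite /bform !mulmxBr !mxE. Qed.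

Lemma bformZl t x z : bform A (t *: x) z = t * bform A x z.
Proof. by rewrite /bform linearZ /= -!scalemxAl mxE. Qed.

Lemma bformZr t x z : bform A z (t *: x) = t * bform A z x.
Proof. by rewrite /bform -!scalemxAr mxE. Qed.

Lemma bform_delta i j : bform A (delta_mx i 0) (delta_mx j 0) = A i j.
Proof. by rewrite /bform trmx_delta -rowE -colE !mxE. Qed.

Lemma sqdist_bform i j :
  sqdist A i j = bform A (delta_mx i 0 - delta_mx j 0) (delta_mx i 0 - delta_mx j 0).
Proof. by rewrite !bformBl !bformBr !bform_delta /sqdist; ring. Qed.

Lemma sqdistC i j : sqdist A i j = sqdist A j i.
Proof. by rewrite /sqdist; ring. Qed.

Hypothesis symA : A^T = A.

Lemma bformC x y : bform A x y = bform A y x.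
Proof.
have -> : bform A x y = (x^T *m A *m y)^T 0 0 by rewrite [RHS]mxE.
by rewrite !trmx_mul trmxK symA mulmxA.
Qed.

Lemma bform_expand x y t :
  bform A (x + t *: y) (x + t *: y) =
  bform A x x + 2%:R * t * bform A x y + t ^+ 2 * bform A y y.
Proof. by rewrite !bformDl !bformDr !bformZl !bformZr (bformC y x); ring. Qed.

End BilinearForm.

Lemma sqdistB (R : comPzRingType) n (A B : 'M[R]_n) i j :
  sqdist (A - B) i j = sqdist A i j - sqdist B i j.
Proof. by rewrite /sqdist !mxE; ring. Qed.

Section CenteredMatrices.
Variables (R : numFieldType) (n : nat).

Lemma centered_sqdist_eq0 (Z : 'M[R]_n) :
  Z^T = Z -> Z *m (const_mx 1 : 'cV_n) = 0 -> (forall a b, sqdist Z a b = 0) -> Z = 0.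
Proof.
move=> symZ Z1 sqdist0.
have Zsym a b : Z b a = Z a b by rewrite -[in LHS]symZ mxE.
have row_sum a : \sum_b Z a b = 0.
  have := congr1 (fun M : 'cV[R]_n => M a 0) Z1; rewrite !mxE => Z1a.
  rewrite -[RHS]Z1a.
  by apply: eq_bigr => b _; rewrite mxE mulr1.
have offdiag a b : Z a b *+ 2 = Z a a + Z b b.
  by apply/eqP; rewrite eq_sym -subr_eq0 -(sqdist0 a b) /sqdist Zsym mulr2n opprD addrA.
have diag a : Z a a *+ n + \tr Z = 0.
  rewrite -(mul0rn _ 2) -(row_sum a) -sumrMnl.
  under eq_bigr => b _ do rewrite offdiag.
  by rewrite big_split /= sumr_const card_ord.
apply/matrixP => a0 b0; rewrite mxE.
have n_gt0 : (0 < n)%N by apply: leq_ltn_trans (ltn_ord a0).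
have tr0 : \tr Z = 0.
  have : \tr Z *+ (n + n)%N = 0.
    have sum_diag : \sum_a (Z a a *+ n + \tr Z) = 0 by rewrite big1.
    by rewrite mulrnDr -[RHS]sum_diag big_split /= sumr_const card_ord -sumrMnl.
  by move/eqP; rewrite mulrn_eq0 addn_eq0 (gtn_eqF n_gt0) => /eqP.
have diag0 a : Z a a = 0.
  by apply/eqP; have /eqP := diag a; rewrite tr0 addr0 mulrn_eq0 (gtn_eqF n_gt0).
by apply/eqP; have /eqP := offdiag a0 b0; rewrite !diag0 addr0 mulrn_eq0.
Qed.

Lemma centered_sqdist_inj (A B : 'M[R]_n) :
  A^T = A -> B^T = B -> A *m (const_mx 1 : 'cV_n) = 0 -> B *m (const_mx 1 : 'cV_n) = 0 ->
  (forall a b, sqdist A a b = sqdist B a b) -> A = B.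
Proof.
move=> symA symB A1 B1 eqAB; apply/eqP; rewrite -subr_eq0; apply/eqP.
apply: centered_sqdist_eq0 => [|| a b]; last by rewrite sqdistB eqAB subrr.
- by rewrite linearB /= symA symB.
- by rewrite mulmxBl A1 B1 subrr.
Qed.

End CenteredMatrices.

Section PsdMatrices.
Variables (R : realType) (n : nat).
Implicit Types (A : 'M[R]_n) (x y : 'cV[R]_n).

Lemma psd_bform_eq0 A x y :
  A^T = A -> psd_mx A -> bform A y y = 0 -> bform A x y = 0.
Proof.
move=> symA psdA yy0; have [//|c_neq0] := eqVneq (bform A x y) 0.
set c := bform A x y in c_neq0; set b := bform A x x.
(* On the line x + t y the form is b + 2 t c, negative for t = -(b + 1) / (2 c). *)
have := psdA (x + (- (b + 1) / (2%:R * c)) *: y).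
rewrite -/(bform _ _ _) (bform_expand symA) yy0 -/c -/b mulr0 addr0.
have -> : 2%:R * (- (b + 1) / (2%:R * c)) * c = - (b + 1) by field.
lra.
Qed.

Lemma psd_cauchy_schwarz A x y : A^T = A -> psd_mx A ->
  bform A x y ^+ 2 <= bform A x x * bform A y y.
Proof.
move=> symA psdA; have [yy0 | yy_neq0] := eqVneq (bform A y y) 0.
  by rewrite (psd_bform_eq0 x symA psdA yy0) yy0 expr0n mulr0.
have yy_gt0 : 0 < bform A y y by rewrite lt_def yy_neq0; apply: psdA.
set c := bform A x y; set a := bform A y y in yy_neq0 yy_gt0 *.
have := psdA (x + (- c / a) *: y).
rewrite -/(bform _ _ _) (bform_expand symA) -/c -/a.
have -> : bform A x x + 2%:R * (- c / a) * c + (- c / a) ^+ 2 * a =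
          (bform A x x * a - c ^+ 2) / a by field.
by rewrite pmulr_lge0 ?invr_gt0 // subr_ge0.
Qed.

Lemma psd_diag_ge0 A k : psd_mx A -> 0 <= A k k.
Proof. by move=> psdA; rewrite -bform_delta; apply: psdA. Qed.

Lemma sqdist_ge0 A i j : psd_mx A -> 0 <= sqdist A i j.
Proof. by move=> psdA; rewrite sqdist_bform; apply: psdA. Qed.

(* One step of a Cholesky factorisation: the Schur complement of the pivot A k k. *)
Definition deflate A k := A - (A k k)^-1 *: (col k A *m row k A).

Lemma deflateE A k i j : deflate A k i j = A i j - (A k k)^-1 * (A i k * A k j).
Proof. by rewrite !mxE big_ord1 !mxE. Qed.

Lemma deflate_sym A k : A^T = A -> (deflate A k)^T = deflate A k.
Proof. by move=> symA; rewrite linearB linearZ /= trmx_mul tr_col tr_row symA. Qed.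

Lemma bform_deflate A k x : A^T = A ->
  bform (deflate A k) x x = bform A x x - (A k k)^-1 * bform A x (delta_mx k 0) ^+ 2.
Proof.
move=> symA; rewrite expr2 {2}(bformC symA) /deflate /bform.
rewrite mulmxBr mulmxBl -scalemxAr -scalemxAl.
have -> : x^T *m (col k A *m row k A) *m x =
          (x^T *m A *m delta_mx k 0) *m ((delta_mx k 0 : 'cV_n)^T *m A *m x).
  by rewrite colE rowE trmx_delta !mulmxA.
by rewrite !mxE big_ord1 !mxE.
Qed.

Lemma deflate_psd A k : A^T = A -> psd_mx A -> 0 < A k k -> psd_mx (deflate A k).
Proof.
move=> symA psdA akk_gt0 x; rewrite -/(bform _ _ _) bform_deflate // subr_ge0.
rewrite mulrC ler_pdivrMr //.
by have := psd_cauchy_schwarz x (delta_mx k 0) symA psdA; rewrite bform_delta.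
Qed.

Lemma deflate_support A k : A^T = A -> psd_mx A -> A k k != 0 ->
  [set i | deflate A k i i != 0] \proper [set i | A i i != 0].
Proof.
move=> symA psdA akk_neq0; apply/properP; split.
  apply/subsetP => i; rewrite !inE; apply: contraNN => /eqP aii0.
  have aki0 j : A j i = 0.
    by rewrite -bform_delta (psd_bform_eq0 _ symA psdA) // bform_delta.
  have aik0 : A i k = 0 by rewrite -symA mxE aki0.
  by rewrite deflateE aii0 aik0 !mul0r mulr0 subr0.
exists k; first by rewrite inE.
by rewrite inE deflateE negbK mulrA mulVf // mul1r subrr.
Qed.

Lemma deflateK A k : A^T = A -> 0 < A k k ->
  A = deflate A k +
      ((Num.sqrt (A k k))^-1 *: col k A) *m ((Num.sqrt (A k k))^-1 *: col k A)^T.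
Proof.
move=> symA akk_gt0; rewrite linearZ /= -scalemxAl -scalemxAr scalerA.
by rewrite -invfM -expr2 sqr_sqrtr ?ltW // tr_col symA /deflate subrK.
Qed.

Lemma psd_factor A : A^T = A -> psd_mx A -> exists m (Q : 'M[R]_(m, n)), A = Q^T *m Q.
Proof.
have [c] := ubnP #|[set i | A i i != 0]|.
elim: c A => // c IH A support_le symA psdA.
have [k akk_neq0 | diag0] := pickP (fun i => A i i != 0); last first.
  exists 0%N, 0; apply/matrixP => i j; rewrite mulmx0 mxE.
  by rewrite -bform_delta psd_bform_eq0 // bform_delta; apply/eqP/negbFE/diag0.
have akk_gt0 : 0 < A k k by rewrite lt_def akk_neq0 psd_diag_ge0.
have [m [Q defA']] : exists m (Q : 'M[R]_(m, n)), deflate A k = Q^T *m Q.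
  apply: IH; [|exact: deflate_sym|exact: deflate_psd].
  exact: leq_trans (proper_card (deflate_support symA psdA akk_neq0)) support_le.
exists (1 + m)%N, (col_mx ((Num.sqrt (A k k))^-1 *: col k A)^T Q).
by rewrite tr_col_mx mul_row_col trmxK -defA' addrC -deflateK.
Qed.

End PsdMatrices.

Section Frameworks.
Variable R : realType.

Lemma edist_col_mx0 k d (x y : 'cV[R]_k) :
  edist (col_mx x (0 : 'cV_d)) (col_mx y 0) = edist x y.
Proof.
rewrite /edist big_split_ord /= [X in _ + X]big1 ?addr0 => [|l _].
  by under eq_bigr do rewrite !col_mxEu.
by rewrite !col_mxEd !mxE subrr expr0n.
Qed.

Lemma edist_mulmx_delta m n (Q : 'M[R]_(m, n)) i j :
  edist (Q *m delta_mx i 0) (Q *m delta_mx j 0) = Num.sqrt (sqdist (Q^T *m Q) i j).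
Proof.
rewrite sqdist_bform; set e : 'cV_n := delta_mx i 0 - delta_mx j 0.
have -> : bform (Q^T *m Q) e e = ((Q *m e)^T *m (Q *m e)) 0 0.
  by rewrite /bform trmx_mul !mulmxA.
rewrite /edist mxE; congr Num.sqrt; apply: eq_bigr => l _.
by rewrite /e mulmxBr !mxE expr2.
Qed.

Variable V : finType.

Lemma config_mx_basis_vec d (p : V -> 'cV[R]_d) i : config_mx p *m basis_vec R i = p i.
Proof.
by rewrite /basis_vec -colE; apply/matrixP => k l; rewrite !mxE enum_rankK (ord1 l).
Qed.

Lemma gram_mxE d (p : V -> 'cV[R]_d) i j :
  gram_mx p (enum_rank i) (enum_rank j) = ((p i)^T *m p j) 0 0.
Proof. by rewrite !mxE; apply: eq_bigr => k _; rewrite !mxE !enum_rankK. Qed.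

Lemma gram_mx_sym d (p : V -> 'cV[R]_d) : (gram_mx p)^T = gram_mx p.
Proof. by rewrite trmx_mul trmxK. Qed.

Lemma gram_mx_psd d (p : V -> 'cV[R]_d) : psd_mx (gram_mx p).
Proof.
move=> x; rewrite /gram_mx !mulmxA -trmx_mul -mulmxA mxE.
by apply: sumr_ge0 => k _; rewrite mxE -expr2 sqr_ge0.
Qed.

Lemma gram_mx_centered d (p : V -> 'cV[R]_d) :
  \sum_i p i = 0 -> gram_mx p *m (const_mx 1 : 'cV_#|V|) = 0.
Proof.
move=> sum_p0; rewrite -mulmxA.
suff -> : config_mx p *m (const_mx 1 : 'cV_#|V|) = 0 by rewrite mulmx0.
apply/matrixP => k l; have := congr1 (fun v : 'cV_d => v k 0) sum_p0.
rewrite !mxE summxE => sum_pk0; rewrite -[RHS]sum_pk0.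
rewrite (reindex (@enum_val _ V)) /=; last exact/onW_bij/enum_val_bij.
by apply: eq_bigr => i _; rewrite !mxE mulr1.
Qed.

Lemma edist_gram d (p : V -> 'cV[R]_d) i j :
  edist (p i) (p j) = Num.sqrt (sqdist (gram_mx p) (enum_rank i) (enum_rank j)).
Proof. by rewrite -edist_mulmx_delta !config_mx_basis_vec. Qed.

Lemma mx_inner_F_pair (A : 'M[R]_#|V|) i j :
  mx_inner A (F_pair R i j) = sqdist A (enum_rank i) (enum_rank j).
Proof.
rewrite /mx_inner /F_pair mulmxA mxtrace_mulC sqdist_bform /bform mulmxA.
by rewrite /mxtrace big_ord1.
Qed.

Lemma universally_rigid_sqdist (adj : rel V) d (p : V -> 'cV[R]_d) X :
  universally_rigid adj p -> X^T = X -> psd_mx X ->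
  (forall i j, adj i j -> sqdist X (enum_rank i) (enum_rank j) =
                          sqdist (gram_mx p) (enum_rank i) (enum_rank j)) ->
  forall i j, sqdist X (enum_rank i) (enum_rank j) =
              sqdist (gram_mx p) (enum_rank i) (enum_rank j).
Proof.
move=> rigid_p symX psdX sqdist_adj i j.
have [m [Q defX]] := psd_factor symX psdX; subst X.
pose q v : 'cV[R]_(m + d) := col_mx (Q *m basis_vec R v) 0.
have edist_q v w :
    edist (q v) (q w) = Num.sqrt (sqdist (Q^T *m Q) (enum_rank v) (enum_rank w)).
  by rewrite edist_col_mx0 edist_mulmx_delta.
have : edist (q i) (q j) = edist (p i) (p j).
  apply: (rigid_p (m + d)%N (leq_addl m d)) => v w vw.
  by rewrite edist_q edist_gram sqdist_adj.
have Xij_ge0 := sqdist_ge0 (enum_rank i) (enum_rank j) psdX.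
have Gij_ge0 := sqdist_ge0 (enum_rank i) (enum_rank j) (gram_mx_psd p).
by rewrite edist_q edist_gram => /eqP; rewrite eqr_sqrt // => /eqP.
Qed.

End Frameworks.

Section SymmetricFrameworks.
Variables (R : realType) (gT : finGroupType) (Vh : finType).

Definition gamma_invariant (A : 'M[R]_#|{: gT * Vh}|) : Prop :=
  forall (a b g : gT) (u v : Vh),
    A (enum_rank (a, u)) (enum_rank (b, v)) =
    A (enum_rank ((g * a)%g, u)) (enum_rank ((g * b)%g, v)).

Lemma sqdist_gamma_invariant A g a b u v : gamma_invariant A ->
  sqdist A (enum_rank (a, u)) (enum_rank (b, v)) =
  sqdist A (enum_rank ((g * a)%g, u)) (enum_rank ((g * b)%g, v)).
Proof.
by move=> invA; rewrite /sqdist (invA a a g) (invA b b g) (invA a b g) (invA b a g).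
Qed.

Lemma mx_inner_F_gain A u v g : gamma_invariant A ->
  mx_inner A (F_gain R (u, v, g)) =
  sqdist A (enum_rank (1%g, u)) (enum_rank (g, v)) *+ #|gT|.
Proof.
move=> invA.
transitivity (\sum_(a : gT) mx_inner A (F_pair R (a, u) ((a * g)%g, v))).
  by rewrite /mx_inner /F_gain mulmx_sumr raddf_sum.
rewrite -sumr_const; apply: eq_bigr => a _.
by rewrite mx_inner_F_pair (sqdist_gamma_invariant a^-1) // mulVg mulKg.
Qed.

Lemma sqdist_lift_adj (E : {set Vh * Vh * gT}) A B :
  gamma_invariant A -> gamma_invariant B ->
  (forall e, e \in E -> mx_inner A (F_gain R e) = mx_inner B (F_gain R e)) ->
  forall x y, lift_adj E x y ->
    sqdist A (enum_rank x) (enum_rank y) = sqdist B (enum_rank x) (enum_rank y).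
Proof.
move=> invA invB inner_eq.
have lifted_edge a b u v : (u, v, (a^-1 * b)%g) \in E ->
    sqdist A (enum_rank (a, u)) (enum_rank (b, v)) =
    sqdist B (enum_rank (a, u)) (enum_rank (b, v)).
  have gT_gt0 : (0 < #|gT|)%N by apply/card_gt0P; exists 1%g.
  move=> /inner_eq; rewrite !mx_inner_F_gain // => /(pmulrnI gT_gt0) edge_eq.
  rewrite (sqdist_gamma_invariant a^-1 _ _ _ _ invA).
  by rewrite (sqdist_gamma_invariant a^-1 _ _ _ _ invB) mulVg.
move=> [a u] [b v] /existsP [[[u' v'] g]] /andP [edgeE] /=.
case/orP => /and3P [/eqP eu /eqP ev /eqP eg]; subst u' v' g; first exact: lifted_edge.
by rewrite sqdistC [RHS]sqdistC; apply: lifted_edge; rewrite invMg invgK in edgeE.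
Qed.

Lemma gram_mx_gamma_invariant d (theta : gT -> 'M[R]_d) (p : gT * Vh -> 'cV[R]_d) :
  (forall g, orthogonal_mx (theta g)) -> compatible theta p -> gamma_invariant (gram_mx p).
Proof.
move=> orth_theta compat_p a b g u v; rewrite !gram_mxE -!compat_p trmx_mul.
by rewrite mulmxA -(mulmxA _ _ (theta g)) (mulmx1C (orth_theta g)) mulmx1.
Qed.

Lemma gram_mx_in_LGamma_plus d (theta : gT -> 'M[R]_d) (p : gT * Vh -> 'cV[R]_d) :
  point_group theta -> in_C_theta theta p -> in_LGamma_plus (gram_mx p).
Proof.
move=> [_ _ orth_theta] [compat_p sum_p0]; split.
- exact: gram_mx_sym.
- exact: gram_mx_psd.
- exact: gram_mx_centered.
- exact: gram_mx_gamma_invariant.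
Qed.

End SymmetricFrameworks.

Theorem proposition4p3 (R : realType) (gT : finGroupType) (Vh : finType)
    (d : nat) (theta : gT -> 'M[R]_d) (E : {set Vh * Vh * gT})
    (p : gT * Vh -> 'cV[R]_d) :
  point_group theta ->
  (forall u : Vh, (u, u, 1%g) \notin E) ->
  in_C_theta theta p ->
  universally_rigid (lift_adj E) p ->
  in_LGamma_plus (gram_mx p) /\
  (forall X : 'M[R]_#|{: gT * Vh}|,
     in_LGamma_plus X ->
     (forall e, e \in E -> mx_inner X (F_gain R e) = mx_inner (gram_mx p) (F_gain R e)) ->
     X = gram_mx p).
Proof.
move=> theta_group _ p_sym rigid_p.
have gram_LGamma := gram_mx_in_LGamma_plus theta_group p_sym.
split=> // X [symX psdX X_centered invX] inner_eq.
have [symG _ G_centered invG] := gram_LGamma.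
apply: centered_sqdist_inj => // a b; rewrite -(enum_valK a) -(enum_valK b).
apply: (universally_rigid_sqdist rigid_p) => // x y.
exact: sqdist_lift_adj.
Qed.
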